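(* For every Noetherian commutative ring $R$, $\operatorname{nil}_\infty(R)=0$.
   Context: For a commutative ring $R$, the infinite nilradical is $\operatorname{nil}_\infty(R)=\bigcap_{\mathfrak p\in\operatorname{Spec}(R)}\bigcap_{n\in\mathbb{N}}\mathfrak p^n$. *)

From mathcomp Require Import all_boot all_algebra.
Set Implicit Arguments. Unset Strict Implicit. Unset Printing Implicit Defensive.
Import GRing.Theory.
Local Open Scope ring_scope.

Definition is_ideal (R : comPzRingType) (I : R -> Prop) : Prop :=
  [/\ I 0, (forall x y, I x -> I y -> I (x + y)) & (forall a x, I x -> I (a * x))].

Definition is_prime_ideal (R : comPzRingType) (P : R -> Prop) : Prop :=
  [/\ is_ideal P, ~ P 1 & (forall a b, P (a * b) -> P a \/ P b)].

Definition ideal_mul (R : comPzRingType) (I J : R -> Prop) : R -> Prop :=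
  fun x => exists s : seq (R * R),
    (forall pr, pr \in s -> I pr.1 /\ J pr.2) /\ x = \sum_(pr <- s) pr.1 * pr.2.

Fixpoint ideal_pow (R : comPzRingType) (I : R -> Prop) (n : nat) : R -> Prop :=
  match n with
  | 0 => fun _ => True
  | n'.+1 => ideal_mul (ideal_pow I n') I
  end.

Definition noetherian (R : comPzRingType) : Prop :=
  forall I : nat -> R -> Prop,
    (forall n, is_ideal (I n)) ->
    (forall n x, I n x -> I n.+1 x) ->
    exists N, forall n, (N <= n)%N -> forall x, I n x <-> I N x.

Definition nil_infty (R : comPzRingType) : R -> Prop :=
  fun x => forall P : R -> Prop, is_prime_ideal P -> forall n : nat, ideal_pow P n x.

(* If x <> 0, Noetherianity gives an ideal K maximal among the ideals not
   containing x.  Its colon ideal P = (K : x) is prime, and the maximality of K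
   forces every element of P to have a power in K.  As P is finitely generated,
   P^N is contained in K for some N; but x lies in P^N, whence x in K. *)
From mathcomp Require Import all_boot all_algebra.
From mathcomp Require Import ring zify.
From Stdlib Require Import Classical ClassicalEpsilon.
Set Implicit Arguments. Unset Strict Implicit.
Import GRing.Theory.
Local Open Scope ring_scope.

Section Ideals.
Variable R : comPzRingType.
Implicit Types (I J K L : R -> Prop) (s : seq R).

Fixpoint gen_ideal s : R -> Prop :=
  match s with
  | [::] => fun y => y = 0
  | a :: s' => fun y => exists r w, gen_ideal s' w /\ y = r * a + w
  end.

Lemma is_ideal0 : is_ideal (fun y : R => y = 0).
Proof. by split => [//|x y -> ->|c x ->]; rewrite ?addr0 ?mulr0. Qed.

Lemma is_ideal_gen s : is_ideal (gen_ideal s).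
Proof.
elim: s => [|a s [G0 GD GM]] /=; first exact: is_ideal0.
split.
- by exists 0, 0; rewrite mul0r addr0.
- move=> _ _ [r1 [w1 [Gw1 ->]]] [r2 [w2 [Gw2 ->]]].
  by exists (r1 + r2), (w1 + w2); split; [exact: GD | ring].
- by move=> c _ [r [w [Gw ->]]]; exists (c * r), (c * w); split; [exact: GM | ring].
Qed.

Lemma gen_ideal_head a s : gen_ideal (a :: s) a.
Proof. by exists 1, 0; split; [case: (is_ideal_gen s) | rewrite mul1r addr0]. Qed.

Lemma gen_ideal_cons a s y : gen_ideal s y -> gen_ideal (a :: s) y.
Proof. by move=> Gy; exists 0, y; rewrite mul0r add0r. Qed.

Lemma is_ideal_colon K c : is_ideal K -> is_ideal (fun y => K (c * y)).
Proof.
move=> [K0 KD KM]; split => [|x y Kx Ky|a x Kx]; first by rewrite mulr0.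
  by rewrite mulrDr; apply: KD.
by rewrite mulrCA; apply: KM.
Qed.

Lemma is_ideal_add_principal K b :
  is_ideal K -> is_ideal (fun y => exists z r, K z /\ y = z + r * b).
Proof.
move=> [K0 KD KM]; split.
- by exists 0, 0; rewrite mul0r addr0.
- move=> _ _ [z1 [r1 [Kz1 ->]]] [z2 [r2 [Kz2 ->]]].
  by exists (z1 + z2), (r1 + r2); split; [exact: KD | ring].
- by move=> c _ [z [r [Kz ->]]]; exists (c * z), (c * r); split; [exact: KM | ring].
Qed.

Lemma ideal_mul_prod I J u v : I u -> J v -> ideal_mul I J (u * v).
Proof.
move=> Iu Jv; exists [:: (u, v)]; split; last by rewrite big_seq1.
by move=> pr; rewrite inE => /eqP ->.
Qed.

Lemma ideal_mul_min I J L :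
  is_ideal L -> (forall u v, I u -> J v -> L (u * v)) ->
  forall y, ideal_mul I J y -> L y.
Proof.
move=> [L0 LD LM] LIJ _ [s [IJs ->]].
elim: s IJs => [|pr s IH] IJs; first by rewrite big_nil.
rewrite big_cons; apply: LD; first by have [] := IJs pr (mem_head _ _); apply: LIJ.
by apply: IH => q qs; apply: IJs; rewrite inE qs orbT.
Qed.

Lemma ideal_pow_sub I J n :
  (forall y, I y -> J y) -> forall y, ideal_pow I n y -> ideal_pow J n y.
Proof.
move=> IJ; elim: n => [//|n IH] _ /= [s [IJs ->]].
by exists s; split => // pr /IJs [? ?]; split; auto.
Qed.

(* Binomial expansion of (a, s)^n, stated dually: any ideal containing all the
   a^i * z with z in (s)^(n - i) contains (a, s)^n. *)
Lemma ideal_pow_gen_cons K a s n :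
  is_ideal K ->
  (forall i z, (i <= n)%N -> ideal_pow (gen_ideal s) (n - i) z -> K (a ^+ i * z)) ->
  forall y, ideal_pow (gen_ideal (a :: s)) n y -> K y.
Proof.
elim: n K => [|n IH] K HK Kterms y /=.
  by move=> _; rewrite -[y]mul1r -(expr0 a); apply: Kterms.
have [_ KD KM] := HK.
apply: (ideal_mul_min HK) => u _ Pu [r [w [Gw ->]]].
have -> : u * (r * a + w) = r * (a * u) + w * u by ring.
apply: KD; first apply: KM.
- apply: (IH _ (is_ideal_colon a HK)) Pu => i z le_in Pz.
  by rewrite mulrA -exprS; apply: Kterms; rewrite ?subSS.
- apply: (IH _ (is_ideal_colon w HK)) Pu => i z le_in Pz.
  rewrite mulrCA (mulrC w); apply: Kterms; first exact: leqW.
  by rewrite subSn //=; apply: ideal_mul_prod.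
Qed.

Lemma ideal_pow_gen_sub K s :
  is_ideal K -> (forall g, g \in s -> exists k, K (g ^+ k)) ->
  exists N, forall n, (N <= n)%N -> forall y, ideal_pow (gen_ideal s) n y -> K y.
Proof.
move=> HK; have [K0 _ KM] := HK.
elim: s => [|a s IH] Ks.
  exists 1%N => -[//|n] _ y /=.
  by apply: (ideal_mul_min HK) => u v _ ->; rewrite mulr0.
have [k Kak] := Ks a (mem_head _ _).
have [m Ksm] := IH (fun g gs => Ks g (@mem_behead _ (a :: s) g gs)).
exists (k + m)%N => n le_n; apply: ideal_pow_gen_cons => // i z le_in Pz.
case: (leqP k i) => [le_ki | lt_ik].
  by rewrite mulrC -(subnK le_ki) exprD mulrA; apply: KM.
by apply: KM; apply: (Ksm (n - i)%N) Pz; lia.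
Qed.

Lemma noetherian_max (F : (R -> Prop) -> Prop) I0 :
  noetherian R -> (forall I, F I -> is_ideal I) -> F I0 ->
  exists K, F K /\
    forall L, F L -> (forall y, K y -> L y) -> forall y, L y -> K y.
Proof.
move=> noethR FI FI0; apply: NNPP => nomax.
have grow K : exists L, F K -> [/\ F L, forall y, K y -> L y & exists y, L y /\ ~ K y].
  have [FK|nFK] := classic (F K); last by exists K.
  apply: NNPP => nL; apply: nomax; exists K; split => // L FL KL y Ly.
  by apply: NNPP => nKy; apply: nL; exists L => _; split => //; exists y.
have [g gP] := choice _ grow.
pose c := fix c n := if n is n'.+1 then g (c n') else I0.
have Fc n : F (c n) by elim: n => //= n IH; have [] := gP _ IH.
have c_incr n : forall y, c n y -> c n.+1 y by have [] := gP _ (Fc n).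
have [N stab] := noethR c (fun n => FI _ (Fc n)) c_incr.
have [_ _ [y [cy ncy]]] := gP _ (Fc N).
by apply: ncy; apply/(stab N.+1 (leqnSn N)).
Qed.

Lemma noetherian_fg Q : noetherian R -> is_ideal Q ->
  exists s, (forall g, g \in s -> Q g) /\ forall y, Q y -> gen_ideal s y.
Proof.
move=> noethR HQ.
pose F L := exists s, (forall g, g \in s -> Q g) /\ forall y, L y <-> gen_ideal s y.
have FI L : F L -> is_ideal L.
  move=> [s [_ Ls]]; have [G0 GD GM] := is_ideal_gen s.
  by split => [|x y|a x]; rewrite !Ls; auto.
have F0 : F (gen_ideal [::]) by exists [::].
have [K [[s [Qs Ks]] Kmax]] := noetherian_max noethR FI F0.
exists s; split => // y Qy; apply/Ks.
apply: (Kmax (gen_ideal (y :: s))) (gen_ideal_head _ _).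
  exists (y :: s); split => // g; rewrite inE => /predU1P[-> //|]; exact: Qs.
by move=> z /Ks; apply: gen_ideal_cons.
Qed.

Section MaximalAvoiding.
Variables (K : R -> Prop) (x : R).
Hypotheses (HK : is_ideal K) (nKx : ~ K x).
Hypothesis Kmax :
  forall L, is_ideal L /\ ~ L x -> (forall y, K y -> L y) -> forall y, L y -> K y.

Lemma avoid_max_add b : ~ K b -> exists z r, K z /\ x = z + r * b.
Proof.
move=> nKb; apply: NNPP => nLx; apply: nKb.
apply: (Kmax (conj (is_ideal_add_principal b HK) nLx)).
  by move=> y Ky; exists y, 0; rewrite mul0r addr0.
by exists 0, 1; rewrite mul1r add0r; case: HK.
Qed.

Lemma avoid_max_colon_prime : is_prime_ideal (fun a => K (x * a)).
Proof.
have [_ KD KM] := HK.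
split; [exact: is_ideal_colon | by rewrite mulr1 |].
move=> a b Kxab; have [Kxa|nKxa] := classic (K (x * a)); [by left | right].
have [z [r [Kz ->]]] := avoid_max_add nKxa.
have -> : (z + r * (x * a)) * b = b * z + r * (x * (a * b)) by ring.
by apply: KD; apply: KM.
Qed.

(* The colon ideals (K : a^k) form an ascending chain; at its stable index N,
   writing x = z + r a^N with z in K pushes r into (K : a^N), i.e. x into K. *)
Lemma avoid_max_colon_rad a :
  noetherian R -> K (x * a) -> exists k, K (a ^+ k).
Proof.
move=> noethR Kxa; have [_ KD KM] := HK.
pose C k r := K (a ^+ k * r).
have C_incr k r : C k r -> C k.+1 r by rewrite /C exprS -mulrA; apply: KM.
have [N stab] := noethR C (fun k => is_ideal_colon _ HK) C_incr.
exists N; apply: NNPP => /avoid_max_add [z [r [Kz Ex]]].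
have CN1r : K (a ^+ N.+1 * r).
  have -> : a ^+ N.+1 * r = x * a + (- a) * z by rewrite Ex exprS; ring.
  by apply: KD => //; apply: KM.
by apply: nKx; rewrite Ex mulrC; apply: KD => //; apply/(stab N.+1 (leqnSn N)).
Qed.

End MaximalAvoiding.
End Ideals.

Theorem proposition4p5 (R : comPzRingType) :
  noetherian R -> forall x : R, nil_infty x -> x = 0.
Proof.
move=> noethR x nilx; apply: NNPP => nx0.
have [K [[HK nKx] Kmax]] := @noetherian_max R (fun I => is_ideal I /\ ~ I x)
  (fun y => y = 0) noethR (fun I => @proj1 _ _) (conj (is_ideal0 R) nx0).
have primeP := avoid_max_colon_prime HK nKx Kmax.
have [HP _ _] := primeP.
have [s [Ps Ps_gen]] := noetherian_fg noethR HP.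
have [N PN_K] := ideal_pow_gen_sub HK (fun g gs =>
  avoid_max_colon_rad HK nKx Kmax noethR (Ps g gs)).
by apply: nKx; apply: (PN_K N) => //; apply: ideal_pow_sub Ps_gen _ (nilx _ primeP N).
Qed.
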